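(* Let $\mathcal{M}_1,\mathcal{M}_2$ be two matroids on the same finite ground set $E$ with $m=|E|$, and let $\textsc{OPT}$ be a maximum-cardinality set independent in both. For a uniformly random order $\pi$ of $E$ and $f\in[0,1]$, let $T_f^\pi$ be the set selected by Greedy after processing the first $fm$ elements of $\pi$, and for $i\in\{1,2\}$ let $\Phi_i(T_f^\pi)=\mathrm{span}_i(T_f^\pi)\cap\textsc{OPT}$. If $0<f,\epsilon\le\frac12$ and $\mathbb{E}_\pi[|T_1^\pi|]\le\left(\frac12+\epsilon\right)|\textsc{OPT}|$, then $$\mathbb{E}_\pi\left[|\Phi_1(T_f^\pi)\cap\Phi_2(T_f^\pi)|\right]\le 2\epsilon|\textsc{OPT}|\quad\text{and}\quad \mathbb{E}_\pi\left[|\Phi_1(T_f^\pi)\cup\Phi_2(T_f^\pi)|\right]\ge\left(1-\frac{2\epsilon}{f}+2\epsilon\right)|\textsc{OPT}|,$$ and consequently $\mathbb{E}_\pi[|T_f^\pi|]/|\textsc{OPT}|\ge \frac12-\left(\frac1f-2\right)\epsilon$.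
   Context: Greedy processes elements in order and adds an element whenever the current set together with it is independent in both $\mathcal{M}_1$ and $\mathcal{M}_2$. $\mathrm{span}_i(T)=\{e\in E:\mathrm{rank}_{\mathcal{M}_i}(T\cup\{e\})=\mathrm{rank}_{\mathcal{M}_i}(T)\}$. *)

From HB Require Import structures.
From mathcomp Require Import all_boot all_order all_algebra perm.
Set Implicit Arguments. Unset Strict Implicit. Unset Printing Implicit Defensive.
Import Order.TTheory GRing.Theory Num.Theory.

(* Matroids on the finite ground set E = the whole finType T,
   given by their independent sets. *)
Record matroid (T : finType) := Matroid {
  indep : {set T} -> bool;
  indep0 : indep set0;
  indep_sub : forall A B : {set T}, A \subset B -> indep B -> indep A;
  indep_exch : forall A B : {set T}, indep A -> indep B -> #|A| < #|B| ->
                 exists2 x, x \in B :\: A & indep (x |: A)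
}.

Definition mrank (T : finType) (M : matroid T) (A : {set T}) : nat :=
  \max_(B : {set T} | (B \subset A) && indep M B) #|B|.

Definition mspan (T : finType) (M : matroid T) (A : {set T}) : {set T} :=
  [set e | mrank M (e |: A) == mrank M A].

Definition greedy (T : finType) (M1 M2 : matroid T) (s : seq T) : {set T} :=
  foldl (fun S e => if indep M1 (e |: S) && indep M2 (e |: S) then e |: S else S)
        set0 s.

(* The order of E induced by a permutation p: p(x_1), ..., p(x_m),
   where x_1..x_m = enum T.  Uniform p gives a uniform order. *)
Definition order_of (T : finType) (p : {perm T}) : seq T := [seq p x | x <- enum T].

Definition greedy_prefix (T : finType) (M1 M2 : matroid T) (k : nat) (p : {perm T})
  : {set T} := greedy M1 M2 (take k (order_of p)).

Definition Eperm (R : numFieldType) (T : finType) (X : {perm T} -> R) : R :=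
  (#|{perm T}|%:R)^-1 * \sum_(p : {perm T}) X p.

From HB Require Import structures.
From mathcomp Require Import all_boot all_order all_algebra perm.
From mathcomp Require Import zify lra.
Import Order.TTheory GRing.Theory Num.Theory.

Set Implicit Arguments.
Unset Strict Implicit.
Unset Printing Implicit Defensive.

(* Fix e in OPT and let q_e be the probability that e comes first in the order
   and is not spanned by Greedy run on the next k elements. The position of e
   in a uniformly random order is uniform and independent of the relative order
   of the other elements. If e is still outside both spans after k steps, it
   has not been processed, so Greedy ran on the first k other elements without
   spanning it: this has probability at most (m - k) q_e. If instead e sits in
   one of the first k positions and the same holds, Greedy picks e: this has
   probability at least k q_e.
   Each Phi_i(T) is independent in M_i and lies in span_i(T), so
   |Phi_1 u Phi_2| + |Phi_1 n Phi_2| <= 2|T|. At the end of the run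
   Phi_1 u Phi_2 = OPT, which with the hypothesis on E|T_1| gives
   E|Phi_1 n Phi_2| <= 2 eps |OPT|; this intersection only grows with time and
   contains OPT n T_f, so k sum_e q_e <= 2 eps |OPT|. With m = k / f the three
   bounds follow by linear arithmetic. *)

Section MatroidSpan.
Variables (T : finType) (M : matroid T).

Lemma card_le_mrank (A B : {set T}) : B \subset A -> indep M B -> #|B| <= mrank M A.
Proof.
by move=> sBA iB; apply: (@leq_bigmax_cond _ _ (fun B : {set T} => #|B|) B); rewrite sBA iB.
Qed.

Lemma mrank_witness (A : {set T}) :
  exists2 B : {set T}, (B \subset A) && indep M B & mrank M A = #|B|.
Proof.
have : 0 < #|[pred B : {set T} | (B \subset A) && indep M B]|.
  by apply/card_gt0P; exists set0; rewrite inE sub0set indep0.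
rewrite /mrank => /(eq_bigmax_cond (fun B : {set T} => #|B|)) [B ? ->]; by exists B.
Qed.

Lemma mrank_indep (A : {set T}) : indep M A -> mrank M A = #|A|.
Proof.
move=> iA; apply/eqP; rewrite eqn_leq card_le_mrank // andbT.
by have [B /andP[sBA _] ->] := mrank_witness A; apply: subset_leq_card.
Qed.

Lemma mspan_indep (A : {set T}) e : indep M A ->
  (e \in mspan M A) = (e \in A) || ~~ indep M (e |: A).
Proof.
move=> iA; rewrite /mspan inE (mrank_indep iA).
have [eA|eA] /= := boolP (e \in A).
  by rewrite (setUidPr (_ : [set e] \subset A)) ?sub1set // (mrank_indep iA) eqxx.
have [ieA|ieA] /= := boolP (indep M (e |: A)).
  by rewrite mrank_indep // cardsU1 eA add1n gtn_eqF.
rewrite eqn_leq card_le_mrank ?subsetUr // andbT.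
have [B /andP[sB iB] ->] := mrank_witness (e |: A).
rewrite leqNgt; apply/negP => ltAB.
have [x /setDP[xB xA] ixA] := indep_exch iA iB ltAB.
move: (subsetP sB x xB); rewrite in_setU1 (negbTE xA) orbF => /eqP xe.
by move: ixA; rewrite xe (negbTE ieA).
Qed.

Lemma sub_mspan (A : {set T}) : indep M A -> A \subset mspan M A.
Proof. by move=> iA; apply/subsetP => x xA; rewrite mspan_indep // xA. Qed.

Lemma card_indep_sub_mspan (A X : {set T}) :
  indep M A -> indep M X -> X \subset mspan M A -> #|X| <= #|A|.
Proof.
move=> iA iX sX; rewrite leqNgt; apply/negP => ltAX.
have [x /setDP[xX xA] ixA] := indep_exch iA iX ltAX.
by move: (subsetP sX x xX); rewrite mspan_indep // (negbTE xA) ixA.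
Qed.

Lemma mspanS (A B : {set T}) : indep M A -> indep M B -> A \subset B ->
  mspan M A \subset mspan M B.
Proof.
move=> iA iB sAB; apply/subsetP => x; rewrite !mspan_indep //.
case/orP => [xA|nixA]; first by rewrite (subsetP sAB x xA).
by case: (x \in B) => //=; apply: contra nixA; apply/indep_sub/setUS.
Qed.

End MatroidSpan.

Section Greedy.
Variables (T : finType) (M1 M2 : matroid T).

Definition greedy_step (S : {set T}) e :=
  if indep M1 (e |: S) && indep M2 (e |: S) then e |: S else S.

Lemma greedy_rcons s x : greedy M1 M2 (rcons s x) = greedy_step (greedy M1 M2 s) x.
Proof. exact: foldl_rcons. Qed.

Lemma greedy_indep s : indep M1 (greedy M1 M2 s) && indep M2 (greedy M1 M2 s).
Proof.
elim/last_ind: s => [|s x IH]; first by rewrite /greedy /= !indep0.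
by rewrite greedy_rcons /greedy_step; case: ifP.
Qed.

Lemma greedy_indep1 s : indep M1 (greedy M1 M2 s).
Proof. by case/andP: (greedy_indep s). Qed.

Lemma greedy_indep2 s : indep M2 (greedy M1 M2 s).
Proof. by case/andP: (greedy_indep s). Qed.

Lemma greedy_subset_cat s t : greedy M1 M2 s \subset greedy M1 M2 (s ++ t).
Proof.
rewrite /greedy foldl_cat; elim: t (foldl _ _ s) => //= x t IH S.
by apply: subset_trans (IH _); case: ifP => _; rewrite ?subsetUr.
Qed.

Lemma greedy_take_subset s j k : j <= k ->
  greedy M1 M2 (take j s) \subset greedy M1 M2 (take k s).
Proof. by move=> jk; rewrite -(subnKC jk) takeD greedy_subset_cat. Qed.

Lemma mspan_greedy_take s j k : j <= k ->
  (mspan M1 (greedy M1 M2 (take j s)) \subset mspan M1 (greedy M1 M2 (take k s))) &&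
  (mspan M2 (greedy M1 M2 (take j s)) \subset mspan M2 (greedy M1 M2 (take k s))).
Proof.
move=> jk; have sub := greedy_take_subset s jk.
by rewrite !mspanS ?greedy_indep1 ?greedy_indep2.
Qed.

Lemma greedy_spans s x : x \in s ->
  (x \in mspan M1 (greedy M1 M2 s)) || (x \in mspan M2 (greedy M1 M2 s)).
Proof.
elim/last_ind: s => [|s y IH] //; rewrite mem_rcons in_cons.
have sub : greedy M1 M2 s \subset greedy M1 M2 (rcons s y).
  by rewrite -cats1 greedy_subset_cat.
have /subsetP span1 := mspanS (greedy_indep1 s) (greedy_indep1 (rcons s y)) sub.
have /subsetP span2 := mspanS (greedy_indep2 s) (greedy_indep2 (rcons s y)) sub.
case/orP => [/eqP->|/IH/orP[/span1->|/span2->]]; rewrite ?orbT //.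
rewrite !mspan_indep ?greedy_indep1 ?greedy_indep2 // greedy_rcons /greedy_step.
by case: ifP => [_|/negbT]; rewrite ?setU11 // negb_and => /orP[]->; rewrite !orbT.
Qed.

End Greedy.

Section AdjacentSwap.
Variable T : eqType.
Implicit Types (X Y s : seq T) (e x y : T).

Lemma split_adjacent s x0 j : j.+1 < size s ->
  s = take j s ++ nth x0 s j :: nth x0 s j.+1 :: drop j.+2 s.
Proof.
by move=> hj; rewrite -{1}(cat_take_drop j s) (drop_nth x0 (ltnW hj)) (drop_nth x0 hj).
Qed.

Lemma rem_cat_notin e X Y : e \notin X -> rem e (X ++ Y) = X ++ rem e Y.
Proof.
elim: X => //= x X IH; rewrite in_cons negb_or => /andP[ex /IH->].
by rewrite eq_sym (negbTE ex).
Qed.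

Lemma take_rem e s k : k <= index e s -> take k (rem e s) = take k s.
Proof. by move=> hk; rewrite remE takel_cat ?size_takel ?index_size // take_takel. Qed.

Lemma index_swap_adjacent e X Y x y : uniq (X ++ x :: y :: Y) ->
  (index e (X ++ y :: x :: Y) == (size X).+1) = (index e (X ++ x :: y :: Y) == size X).
Proof.
rewrite cat_uniq => /and3P[_ _ /= /andP[]]; rewrite in_cons negb_or => /andP[xy _] _.
rewrite !index_cat; case: ifP => [eX|_].
  have lt : index e X < size X by rewrite index_mem.
  by rewrite !ltn_eqF // ltnS ltnW.
rewrite -[(size X).+1]addn1 eqn_add2l -{2}[size X]addn0 eqn_add2l /=.
case: (y =P e) (x =P e) => [ye|_] [xe|_] //.
by rewrite xe ye eqxx in xy.
Qed.

Lemma rem_swap_adjacent e X Y x y : index e (X ++ x :: y :: Y) = size X ->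
  rem e (X ++ y :: x :: Y) = rem e (X ++ x :: y :: Y).
Proof.
rewrite index_cat; case: ifP => [eX|eX /eqP].
  by move=> /eqP; rewrite ltn_eqF // index_mem.
rewrite -{2}[size X]addn0 eqn_add2l /= => /eqP.
by case: (x =P e) => // -> _; rewrite !rem_cat_notin ?eX //= eqxx; case: eqP => [->|].
Qed.

End AdjacentSwap.

Lemma map_tperm_adjacent (T : finType) (X Y : seq T) a b : uniq (X ++ a :: b :: Y) ->
  map (tperm a b) (X ++ a :: b :: Y) = X ++ b :: a :: Y.
Proof.
rewrite cat_uniq => /and3P[_ /= hasX /andP[aT /andP[bY _]]].
move: hasX aT; rewrite in_cons !negb_or => /and3P[aX bX _] /andP[_ aY].
have fixed Z : a \notin Z -> b \notin Z -> map (tperm a b) Z = Z.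
  move=> aZ bZ; apply: map_id_in => z zZ; apply: tpermD.
    by apply: contraNneq aZ => ->.
  by apply: contraNneq bZ => ->.
by rewrite map_cat /= tpermL tpermR !fixed.
Qed.

Section RandomOrder.
Variables (T : finType) (e : T).
Implicit Type p : {perm T}.

Lemma order_of_uniq p : uniq (order_of p).
Proof. by rewrite map_inj_uniq ?enum_uniq //; apply: perm_inj. Qed.

Lemma mem_order_of p x : x \in order_of p.
Proof. by rewrite -(permKV p x) mem_map ?mem_enum //; apply: perm_inj. Qed.

Lemma size_order_of p : size (order_of p) = #|T|.
Proof. by rewrite size_map cardT. Qed.

Lemma take_order_of_card p : take #|T| (order_of p) = order_of p.
Proof. by rewrite -(size_order_of p) take_size. Qed.

Definition pos p := index e (order_of p).
Definition rest p := rem e (order_of p).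

Lemma pos_lt p : pos p < #|T|.
Proof. by rewrite -(size_order_of p) index_mem mem_order_of. Qed.

(* Precomposing with the transposition of the [j]th and [j.+1]th elements of
   [enum T] swaps the entries at positions [j] and [j.+1] of the order: a
   bijection between orders with [e] at [j] and at [j.+1] that preserves the
   relative order of the other elements. *)
Lemma sum_pos_succ (G : seq T -> nat) j : j.+1 < #|T| ->
  \sum_p (pos p == j.+1) * G (rest p) = \sum_p (pos p == j) * G (rest p).
Proof.
move=> hj; set a := nth e (enum T) j; set b := nth e (enum T) j.+1.
set A := take j (enum T); set D := drop j.+2 (enum T).
have enumE : enum T = A ++ a :: b :: D by apply: split_adjacent; rewrite -cardT.
rewrite (reindex_inj (mulgI (tperm a b))); apply: eq_bigr => p _.
have orderE : order_of p = map p A ++ p a :: p b :: map p D.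
  by rewrite /order_of enumE map_cat.
have orderJE : order_of (tperm a b * p) = map p A ++ p b :: p a :: map p D.
  rewrite /order_of (eq_map (permM _ _)) (map_comp p) enumE.
  by rewrite map_tperm_adjacent -?enumE ?enum_uniq // map_cat.
have sizeA : size (map p A) = j.
  by rewrite size_map size_takel // -cardT (ltnW (ltnW hj)).
rewrite /pos /rest orderJE orderE -sizeA index_swap_adjacent; last first.
  by rewrite -orderE order_of_uniq.
by case: eqP => // /rem_swap_adjacent ->.
Qed.

Lemma sum_pos_const (G : seq T -> nat) j : j < #|T| ->
  \sum_p (pos p == j) * G (rest p) = \sum_p (pos p == 0) * G (rest p).
Proof. by elim: j => [|j IH] hj //; rewrite sum_pos_succ // IH // ltnW. Qed.

(* The position of [e] in a uniformly random order is uniform and independent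
   of the relative order of the other elements. *)
Lemma sum_pos_rest (F : nat -> nat) (G : seq T -> nat) :
  \sum_p F (pos p) * G (rest p) =
  (\sum_(j < #|T|) F j) * \sum_p (pos p == 0) * G (rest p).
Proof.
transitivity (\sum_p \sum_(j < #|T|) (pos p == j) * (F j * G (rest p))).
  apply: eq_bigr => p _; rewrite (bigD1 (Ordinal (pos_lt p))) //= eqxx mul1n.
  rewrite big1 ?addn0 // => j; rewrite -val_eqE /= eq_sym => /negbTE->.
  by rewrite mul0n.
rewrite exchange_big big_distrl /=; apply: eq_bigr => j _.
rewrite -(sum_pos_const G (ltn_ord j)) big_distrr /=.
by apply: eq_bigr => p _; rewrite mulnCA.
Qed.

End RandomOrder.

Lemma sum_ord_ge m k : \sum_(j < m) (k <= j) = m - k.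
Proof.
elim: m => [|m IH]; first by rewrite big_ord0.
by rewrite big_ord_recr /= IH; case: leqP; lia.
Qed.

Lemma sum_ord_lt m k : \sum_(j < m) (j < k) = minn m k.
Proof.
elim: m => [|m IH]; first by rewrite big_ord0 min0n.
by rewrite big_ord_recr /= IH; case: ltnP; lia.
Qed.

Section UnspannedElement.
Variables (T : finType) (M1 M2 : matroid T) (e : T).
Implicit Type p : {perm T}.

Definition unspanned k (s : seq T) : bool :=
  (e \notin mspan M1 (greedy M1 M2 (take k s))) &&
  (e \notin mspan M2 (greedy M1 M2 (take k s))).

Lemma unspannedW s j k : j <= k -> unspanned k s -> unspanned j s.
Proof.
move=> jk; case/andP: (mspan_greedy_take M1 M2 s jk) => /subsetP sub1 /subsetP sub2.
by case/andP=> n1 n2; rewrite /unspanned (contra (sub1 e) n1) (contra (sub2 e) n2).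
Qed.

(* An element outside both spans after [k] steps has not been processed yet,
   so Greedy ran on the same prefix with or without it. *)
Lemma unspanned_order k p :
  unspanned k (order_of p) -> k <= pos e p /\ unspanned k (rest e p).
Proof.
move=> hk; have kp : k <= pos e p.
  rewrite leqNgt; apply: contraL hk => lt; rewrite /unspanned -negb_or negbK.
  by apply: greedy_spans; rewrite in_take ?mem_order_of.
by split; rewrite // /unspanned /rest take_rem.
Qed.

Lemma mem_greedy_prefix k p :
  pos e p < k -> unspanned k (rest e p) -> e \in greedy_prefix M1 M2 k p.
Proof.
move=> lt /(unspannedW (ltnW lt)); rewrite /unspanned /rest take_rem //.
rewrite !mspan_indep ?greedy_indep1 ?greedy_indep2 // !negb_or !negbK.
case/andP=> /andP[_ i1] /andP[_ i2].
apply: (subsetP (greedy_take_subset M1 M2 (order_of p) lt)).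
rewrite (take_nth e) ?size_order_of ?pos_lt // nth_index ?mem_order_of //.
by rewrite greedy_rcons /greedy_step i1 i2 setU11.
Qed.

Definition n_first_unspanned k := \sum_p (pos e p == 0) * unspanned k (rest e p).

Lemma sum_unspanned_le k :
  \sum_p unspanned k (order_of p) <= (#|T| - k) * n_first_unspanned k.
Proof.
rewrite -sum_ord_ge -(sum_pos_rest e (leq k) (fun s => unspanned k s)).
apply: leq_sum => p _; case hk: unspanned => //.
by have [-> ->] := unspanned_order hk.
Qed.

Lemma n_first_unspanned_le k : k <= #|T| ->
  k * n_first_unspanned k <= \sum_p (e \in greedy_prefix M1 M2 k p).
Proof.
move=> hk; rewrite -{1}(minn_idPr hk) -sum_ord_lt.
rewrite -(sum_pos_rest e (fun n => n < k) (fun s => unspanned k s)).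
apply: leq_sum => p _; case: ltnP => //= lt; case hr: unspanned => //.
by rewrite mem_greedy_prefix.
Qed.

End UnspannedElement.

Lemma card_setI_sum (T : finType) (A B : {set T}) : #|A :&: B| = \sum_(x in A) (x \in B).
Proof. by rewrite -sum1dep_card big_mkcondr; apply: eq_bigr => x _; case: (x \in B). Qed.

Section SpanTraces.
Variables (T : finType) (M1 M2 : matroid T) (O : {set T}).

Local Notation Phi M S := (mspan M S :&: O).

(* [Phi M_i S] is an independent subset of [span_i S], hence no larger than [S]. *)
Lemma card_PhiU_PhiI (S : {set T}) : indep M1 O -> indep M2 O ->
  indep M1 S -> indep M2 S ->
  #|Phi M1 S :|: Phi M2 S| + #|Phi M1 S :&: Phi M2 S| <= 2 * #|S|.
Proof.
move=> iO1 iO2 iS1 iS2; rewrite cardsUI mul2n -addnn.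
by rewrite leq_add // (card_indep_sub_mspan _ _ (subsetIl _ _)) //;
  apply: indep_sub (subsetIr _ _) _.
Qed.

Lemma subset_PhiI (S : {set T}) : indep M1 S -> indep M2 S ->
  O :&: S \subset Phi M1 S :&: Phi M2 S.
Proof.
move=> iS1 iS2; apply/subsetP => x /setIP[xO xS].
by rewrite !in_setI xO !andbT (subsetP (sub_mspan iS1)) ?(subsetP (sub_mspan iS2)).
Qed.

Lemma subset_PhiU_greedy (s : seq T) : (forall x, x \in s) ->
  O \subset Phi M1 (greedy M1 M2 s) :|: Phi M2 (greedy M1 M2 s).
Proof.
move=> s_full; apply/subsetP => x xO.
by rewrite in_setU !in_setI xO !andbT greedy_spans.
Qed.

Lemma PhiI_greedy_take_subset (s : seq T) j k : j <= k ->
  Phi M1 (greedy M1 M2 (take j s)) :&: Phi M2 (greedy M1 M2 (take j s)) \subset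
  Phi M1 (greedy M1 M2 (take k s)) :&: Phi M2 (greedy M1 M2 (take k s)).
Proof.
move=> jk; case/andP: (mspan_greedy_take M1 M2 s jk) => sub1 sub2.
by rewrite !setISS ?setSI.
Qed.

Lemma card_PhiU_unspanned (s : seq T) k :
  #|Phi M1 (greedy M1 M2 (take k s)) :|: Phi M2 (greedy M1 M2 (take k s))|
  + \sum_(e in O) unspanned M1 M2 e k s = #|O|.
Proof.
set PhiU := _ :|: _; rewrite -(cardsID PhiU O); congr (_ + _).
  by rewrite (setIidPr _) // subUset !subsetIr.
rewrite setDE card_setI_sum; apply: eq_bigr => e eO.
by rewrite in_setC in_setU !in_setI eO !andbT negb_or.
Qed.

End SpanTraces.

Local Open Scope ring_scope.

Section Expectation.
Variables (R : numFieldType) (T : finType).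
Implicit Types X Y : {perm T} -> R.

Lemma eq_Eperm X Y : X =1 Y -> Eperm X = Eperm Y.
Proof. by move=> XY; rewrite /Eperm (eq_bigr _ (fun p _ => XY p)). Qed.

Lemma Eperm_le X Y : (forall p, X p <= Y p) -> Eperm X <= Eperm Y.
Proof. by move=> XY; rewrite ler_wpM2l ?invr_ge0 ?ler0n // ler_sum. Qed.

Lemma EpermD X Y : Eperm (fun p => X p + Y p) = Eperm X + Eperm Y.
Proof. by rewrite /Eperm big_split mulrDr. Qed.

Lemma EpermZ c X : Eperm (fun p => c * X p) = c * Eperm X.
Proof. by rewrite /Eperm -mulr_sumr mulrCA. Qed.

Lemma Eperm_cst (c : R) : Eperm (fun _ : {perm T} => c) = c.
Proof.
rewrite /Eperm sumr_const -[c *+ _]mulr_natl mulrA mulVf ?mul1r // pnatr_eq0 -lt0n.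
by apply/card_gt0P; exists 1%g.
Qed.

Lemma ler_Eperm_nat (X Y : {perm T} -> nat) a b :
  (a * \sum_p X p <= b * \sum_p Y p)%N ->
  a%:R * Eperm (fun p => (X p)%:R) <= b%:R * Eperm (fun p => (Y p)%:R : R).
Proof.
move=> le_ab; rewrite /Eperm -!natr_sum [a%:R * _]mulrCA [b%:R * _]mulrCA -!natrM.
by rewrite ler_wpM2l ?invr_ge0 ?ler0n ?ler_nat.
Qed.

End Expectation.

Section GreedyExpectations.
Variables (R : realFieldType) (T : finType) (M1 M2 : matroid T) (O : {set T}).

Local Notation S k p := (greedy_prefix M1 M2 k p).
Local Notation Phi M k p := (mspan M (S k p) :&: O).

Lemma Eperm_full_run : indep M1 O -> indep M2 O ->
  #|O|%:R + Eperm (fun p => #|Phi M1 #|T| p :&: Phi M2 #|T| p|%:R : R)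
  <= 2 * Eperm (fun p => #|S #|T| p|%:R).
Proof.
move=> iO1 iO2; rewrite -[#|O|%:R](Eperm_cst T) -EpermD -EpermZ.
apply: Eperm_le => p; rewrite -natrD -natrM ler_nat.
apply: leq_trans (card_PhiU_PhiI iO1 iO2 (greedy_indep1 _ _ _) (greedy_indep2 _ _ _)).
rewrite leq_add2r subset_leq_card // subset_PhiU_greedy // => x.
by rewrite take_order_of_card mem_order_of.
Qed.

Lemma Eperm_PhiI_le k : (k <= #|T|)%N ->
  Eperm (fun p => #|Phi M1 k p :&: Phi M2 k p|%:R : R)
  <= Eperm (fun p => #|Phi M1 #|T| p :&: Phi M2 #|T| p|%:R).
Proof.
by move=> hk; apply: Eperm_le => p; rewrite ler_nat subset_leq_card ?PhiI_greedy_take_subset.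
Qed.

Lemma Eperm_PhiU_PhiI k : indep M1 O -> indep M2 O ->
  Eperm (fun p => #|Phi M1 k p :|: Phi M2 k p|%:R : R)
  + Eperm (fun p => #|Phi M1 k p :&: Phi M2 k p|%:R)
  <= 2 * Eperm (fun p => #|S k p|%:R).
Proof.
move=> iO1 iO2; rewrite -EpermD -EpermZ; apply: Eperm_le => p.
by rewrite -natrD -natrM ler_nat card_PhiU_PhiI ?greedy_indep1 ?greedy_indep2.
Qed.

(* [q] is the probability that the first element of the order lies in [O] and
   is spanned in neither matroid by Greedy run on the next [k] elements. *)
Lemma Eperm_unspanned k : (k <= #|T|)%N -> exists q : R,
  #|O|%:R <= Eperm (fun p => #|Phi M1 k p :|: Phi M2 k p|%:R) + (#|T| - k)%:R * q
  /\ k%:R * q <= Eperm (fun p => #|Phi M1 k p :&: Phi M2 k p|%:R).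
Proof.
move=> hk; exists (Eperm (fun p =>
  (\sum_(e in O) (pos e p == 0) * unspanned M1 M2 e k (rest e p))%:R)); split.
  rewrite -[#|O|%:R](Eperm_cst T).
  rewrite (eq_Eperm (fun p => congr1 _ (esym (card_PhiU_unspanned M1 M2 O (order_of p) k)))).
  rewrite (eq_Eperm (fun p => natrD _ _ _)) EpermD lerD2l -[X in X <= _]mul1r.
  apply: (@ler_Eperm_nat R _ _ _ 1%N).
  rewrite mul1n exchange_big [X in (_ <= _ * X)%N]exchange_big.
  by rewrite big_distrr leq_sum // => e _; apply: sum_unspanned_le.
rewrite -[X in _ <= X]mul1r; apply: (@ler_Eperm_nat R _ _ _ _ 1%N); rewrite mul1n.
apply: (@leq_trans (\sum_p #|O :&: S k p|)); last first.
  apply: leq_sum => p _.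
  by rewrite subset_leq_card ?subset_PhiI ?greedy_indep1 ?greedy_indep2.
rewrite exchange_big big_distrr (eq_bigr _ (fun p _ => card_setI_sum O (S k p))) exchange_big.
by rewrite leq_sum // => e _; apply: n_first_unspanned_le.
Qed.

End GreedyExpectations.

Lemma greedy_bounds_arith (R : realFieldType) (f eps o a t1 i u t q k m : R) :
  0 < f -> f <= 1 / 2 -> f * m = k ->
  o + a <= 2 * t1 -> t1 <= (1 / 2 + eps) * o -> i <= a ->
  o <= u + (m - k) * q -> k * q <= i -> u + i <= 2 * t ->
  [/\ i <= 2 * eps * o, (1 - 2 * eps / f + 2 * eps) * o <= u
    & (1 / 2 - (f^-1 - 2) * eps) * o <= t].
Proof.
move=> f_gt0 f_le fm ha ht1 hia hu hki ht.
have mE : m = f^-1 * k by rewrite -fm mulKf ?gt_eqF.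
have c_ge2 : 2 <= f^-1 by rewrite -[f^-1]mul1r ler_pdivlMr //; lra.
rewrite mE in hu; move: (f^-1) c_ge2 hu => c c_ge2 hu.
have kq : k * q <= 2 * eps * o by lra.
have h1 : 0 <= (c - 1) * (2 * eps * o - k * q) by apply: mulr_ge0; lra.
have h2 : 0 <= (c - 2) * (2 * eps * o - k * q) by apply: mulr_ge0; lra.
by split; lra.
Qed.

Theorem lemma5 (R : realFieldType) (T : finType) (M1 M2 : matroid T)
  (OPT : {set T})
  (hOPT1 : indep M1 OPT) (hOPT2 : indep M2 OPT)
  (hOPTmax : forall S : {set T}, indep M1 S -> indep M2 S -> (#|S| <= #|OPT|)%N)
  (f eps : R) (k : nat)
  (hf0 : 0 < f) (hf1 : f <= 1 / 2) (he0 : 0 < eps) (he1 : eps <= 1 / 2)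
  (hk : f * #|T|%:R = k%:R)
  (hT1 : Eperm (fun p => #|greedy_prefix M1 M2 #|T| p|%:R : R)
         <= (1 / 2 + eps) * #|OPT|%:R) :
  [/\ Eperm (fun p => #|(mspan M1 (greedy_prefix M1 M2 k p) :&: OPT)
                        :&: (mspan M2 (greedy_prefix M1 M2 k p) :&: OPT)|%:R : R)
        <= 2 * eps * #|OPT|%:R,
      (1 - 2 * eps / f + 2 * eps) * #|OPT|%:R
        <= Eperm (fun p => #|(mspan M1 (greedy_prefix M1 M2 k p) :&: OPT)
                        :|: (mspan M2 (greedy_prefix M1 M2 k p) :&: OPT)|%:R : R)
    & (1 / 2 - (f^-1 - 2) * eps) * #|OPT|%:R
        <= Eperm (fun p => #|greedy_prefix M1 M2 k p|%:R : R)].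
Proof.
have km : (k <= #|T|)%N by rewrite -(ler_nat R) -hk ler_piMl //; lra.
have [q [hU hI]] := Eperm_unspanned R M1 M2 OPT km.
apply: (greedy_bounds_arith hf0 hf1 hk (Eperm_full_run R hOPT1 hOPT2) hT1
         (Eperm_PhiI_le R M1 M2 OPT km) _ hI (Eperm_PhiU_PhiI R k hOPT1 hOPT2)).
by rewrite -natrB.
Qed.
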